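(* Let $M$ be a commutative and cocommutative Hopf algebra over $\mathbb{C}$, let $A$ be a commutative $\mathbb{C}$-algebra, let $r$ be an $A$-valued bicharacter on $M$, and let $s=r\circ r^{t}$ be its symmetrization. Then for all $a,b\in M$, \[ \mathrm{EQ}_{r}(ab)=\mathrm{EQ}_{r}(a)\bullet_{s}\mathrm{EQ}_{r}(b). \] In other words, $\mathrm{EQ}_r$ is a homomorphism from $(M\otimes A,\cdot)$ to $(M\otimes A,\bullet_s)$.
   Context: For a Hopf algebra $M$ with coproduct $\Delta$, counit $\eta$ and antipode $S$, Sweedler notation is used: $\Delta(a)=\sum a'\otimes a''$, $\Delta^2(a)=\sum a'\otimes a''\otimes a'''$ (summation signs omitted). An $A$-valued bicharacter on $M$ is a linear map $r:M\otimes M\to A$ such that for all $a,b,c\in M$: $r(1\otimes a)=\eta(a)=r(a\otimes 1)$, $r(ab\otimes c)=\sum r(a\otimes c')r(b\otimes c'')$, and $r(a\otimes bc)=\sum r(a'\otimes b)r(a''\otimes c)$. The convolution of bicharacters is $(r\circ t)(a\otimes b)=\sum r(a'\otimes b')t(a''\otimes b'')$, and $r^{t}(a\otimes b)=r(b\otimes a)$. A bicharacter $t$ is symmetric if $t=t^t$. The symmetrization of $r$ is $s=r\circ r^t$, i.e. $s(a\otimes b)=\sum r(a'\otimes b')r(b''\otimes a'')$. Write $M_A=M\otimes_{\mathbb{C}}A$ with the $A$-linear extension of the product of $M$. For a symmetric bicharacter $t$, the product $\bullet_t$ on $M_A$ is the $A$-bilinear extension of $a\bullet_t b=\sum a'b'\,t(a''\otimes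 b'')$ for $a,b\in M$. The map $\mathrm{EQ}_r:M\to M_A$ is $\mathrm{EQ}_r(m)=\sum r(m'\otimes m'')m'''$, extended $A$-linearly to $M_A$. *)

From mathcomp Require Import all_boot all_algebra complex.
From mathcomp Require Import reals Rstruct.
Set Implicit Arguments. Unset Strict Implicit. Unset Printing Implicit Defensive.
Import GRing.Theory.
Local Open Scope ring_scope.

Definition CC : fieldType := (Rdefinitions.R)[i].

(* ---------- Tensors without a tensor-product library ----------------------
   An element of U (x) W is represented by a finite list of pairs
   [:: (u_1,w_1); ...] standing for  sum_i u_i (x) w_i.  Two such lists
   represent the same tensor iff every C-bilinear map out of U x W (into any
   C-vector space V) takes the same value on them (universal property of the
   tensor product).  Same for triple tensors with trilinear maps. *)

Definition bilin (U W V : lmodType CC) (f : U -> W -> V) : Prop :=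
  (forall (c : CC) (x y : U) (w : W), f (c *: x + y) w = c *: f x w + f y w) /\
  (forall (c : CC) (u : U) (x y : W), f u (c *: x + y) = c *: f u x + f u y).

Definition trilin (U W X V : lmodType CC) (f : U -> W -> X -> V) : Prop :=
  (forall (c : CC) (x y : U) (w : W) (z : X),
      f (c *: x + y) w z = c *: f x w z + f y w z) /\
  (forall u : U, bilin (f u)).

Definition teq (U W : lmodType CC) (s t : seq (U * W)) : Prop :=
  forall (V : lmodType CC) (f : U -> W -> V), bilin f ->
    \sum_(p <- s) f p.1 p.2 = \sum_(p <- t) f p.1 p.2.

Definition teq3 (U W X : lmodType CC) (s t : seq (U * W * X)) : Prop :=
  forall (V : lmodType CC) (f : U -> W -> X -> V), trilin f ->
    \sum_(p <- s) f p.1.1 p.1.2 p.2 = \sum_(p <- t) f p.1.1 p.1.2 p.2.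

Section Hopf.
Variable M : comAlgType CC.
(* coproduct, given as a Sweedler representative: Delta a = sum_{p <- D a} p.1 (x) p.2 *)
Variable D : M -> seq (M * M).
Variable eps : M -> CC.
Variable S : M -> M.

(* (Delta (x) id) Delta a, as a list of triples  a' (x) a'' (x) a''' *)
Definition cop2 (a : M) : seq (M * M * M) :=
  flatten [seq [seq (q.1, q.2, p.2) | q <- D p.1] | p <- D a].

(* (id (x) Delta) Delta a *)
Definition cop2' (a : M) : seq (M * M * M) :=
  flatten [seq [seq (p.1, q.1, q.2) | q <- D p.2] | p <- D a].

Definition is_hopf : Prop :=
  (forall (c : CC) (x y : M),
     teq (D (c *: x + y)) ([seq (c *: p.1, p.2) | p <- D x] ++ D y)) /\
  (forall x y : M,
     teq (D (x * y)) [seq (p.1 * q.1, p.2 * q.2) | p <- D x, q <- D y]) /\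
  teq (D 1) [:: (1, 1)] /\
  (forall x : M, teq3 (cop2 x) (cop2' x)) /\
  (forall (c : CC) (x y : M), eps (c *: x + y) = c * eps x + eps y) /\
  (forall x y : M, eps (x * y) = eps x * eps y) /\ eps 1 = 1 /\
  (forall x : M, \sum_(p <- D x) eps p.1 *: p.2 = x /\
                 \sum_(p <- D x) eps p.2 *: p.1 = x) /\
  (forall (c : CC) (x y : M), S (c *: x + y) = c *: S x + S y) /\
  (forall x : M, \sum_(p <- D x) S p.1 * p.2 = eps x *: 1 /\
                 \sum_(p <- D x) p.1 * S p.2 = eps x *: 1).

Definition cocommutative : Prop :=
  forall x : M, teq (D x) [seq (p.2, p.1) | p <- D x].

Variable A : comAlgType CC.

(* r : M (x) M -> A, given as a C-bilinear map M -> M -> A *)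
Definition is_bicharacter (r : M -> M -> A) : Prop :=
  [/\ bilin r,
      (forall x : M, r 1 x = (eps x)%:A /\ r x 1 = (eps x)%:A),
      (forall x y z : M, r (x * y) z = \sum_(p <- D z) r x p.1 * r y p.2) &
      (forall x y z : M, r x (y * z) = \sum_(p <- D x) r p.1 y * r p.2 z)].

Definition bconv (r t : M -> M -> A) : M -> M -> A :=
  fun x y => \sum_(p <- D x) \sum_(q <- D y) r p.1 q.1 * t p.2 q.2.

Definition btr (r : M -> M -> A) : M -> M -> A := fun x y => r y x.

Definition symmetrization (r : M -> M -> A) : M -> M -> A := bconv r (btr r).

(* Elements of M_A = M (x)_C A are lists of pairs (m, alpha) = sum m (x) alpha. *)
Definition teqMA (s t : seq (M * A)) : Prop := teq s t.

Definition EQ (r : M -> M -> A) (m : M) : seq (M * A) :=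
  [seq (w.2, r w.1.1 w.1.2) | w <- cop2 m].

(* the product bullet_t on M_A: A-bilinear extension of
   x bullet_t y = sum x' y' t(x'' (x) y''), i.e.
   (x (x) alpha) bullet_t (y (x) beta) = sum x'y' (x) alpha beta t(x'' (x) y'') *)
Definition bullet (t : M -> M -> A) (X Y : seq (M * A)) : seq (M * A) :=
  flatten [seq flatten [seq [seq (p.1 * q.1, u.2 * v.2 * t p.2 q.2)
                                | p <- D u.1, q <- D v.1]
                           | v <- Y]
          | u <- X].

End Hopf.

From mathcomp Require Import all_boot all_algebra complex.
From mathcomp Require Import reals Rstruct ring.
Set Implicit Arguments. Unset Strict Implicit. Unset Printing Implicit Defensive.
Import GRing.Theory.
Local Open Scope ring_scope.

(* Writing r∘Δ for x |-> Σ r(x', x''), EQ_r(m) = Σ (r∘Δ)(m') m'' and the claim reduces,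
   via multiplicativity of Δ, to the identity
     (r∘Δ)(xy) = Σ (r∘Δ)(x') (r∘Δ)(y') s(x'', y'').
   The bicharacter axioms expand r(x'y', x''y'') into a product of four values of r, so
   both sides become sums over Δ³x ⊗ Δ³y of products of four values of r; they differ
   only by a permutation of the tensor factors, which cocommutativity makes harmless. *)

Section Multilinear.
Variables U W X V : lmodType CC.

Lemma linear_fun_sum (g : U -> W) I (s : seq I) (F : I -> U) :
  linear g -> g (\sum_(i <- s) F i) = \sum_(i <- s) g (F i).
Proof.
move=> /GRing.semilinear_linear/GRing.nmod_morphism_semilinear [g0 gD].
by apply: (big_morph g gD g0).
Qed.

Lemma linear_fun_id : linear (fun x : U => x).
Proof. by []. Qed.

Lemma linear_fun_sumr I (s : seq I) (F : I -> U -> W) :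
  (forall i, linear (F i)) -> linear (fun x => \sum_(i <- s) F i x).
Proof.
move=> linF c x y; rewrite scaler_sumr -big_split /=.
by apply: eq_bigr => i _; rewrite linF.
Qed.

Lemma bilinP (f : U -> W -> V) :
  (forall w, linear (f^~ w)) -> (forall u, linear (f u)) -> bilin f.
Proof. by move=> linl linr; split=> c x y w; [apply: linl | apply: linr]. Qed.

Lemma bilin_linearl (f : U -> W -> V) : bilin f -> forall w, linear (f^~ w).
Proof. by case=> linl _ w c x y; apply: linl. Qed.

Lemma bilin_linearr (f : U -> W -> V) : bilin f -> forall u, linear (f u).
Proof. by case=> _ linr u c x y; apply: linr. Qed.

Lemma linear_bilin_compl (f : U -> W -> V) (h : X -> U) (w : W) :
  bilin f -> linear h -> linear (fun x => f (h x) w).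
Proof. by move=> bf linh c x y; rewrite linh (bilin_linearl bf). Qed.

Lemma linear_bilin_compr (f : U -> W -> V) (h : X -> W) (u : U) :
  bilin f -> linear h -> linear (fun x => f u (h x)).
Proof. by move=> bf linh c x y; rewrite linh (bilin_linearr bf). Qed.

End Multilinear.

Lemma trilinP (U W X V : lmodType CC) (T : U -> W -> X -> V) :
  (forall w z, linear (fun x => T x w z)) -> (forall u z, linear (fun x => T u x z)) ->
  (forall u w, linear (fun x => T u w x)) -> trilin T.
Proof.
move=> lin1 lin2 lin3; split=> [c x y w z|u]; first exact: lin1.
by apply: bilinP => ? ? ? ?; [apply: lin2 | apply: lin3].
Qed.

Lemma bilin_mul (R : algType CC) : bilin (fun a b : R => a * b).
Proof.
by apply: bilinP => w c x y; rewrite ?mulrDl ?mulrDr -?scalerAl -?scalerAr.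
Qed.

Section Sweedler.
Variables (M : comAlgType CC) (D : M -> seq (M * M)).
Hypothesis Delta_linear : forall (c : CC) (x y : M),
  teq (D (c *: x + y)) ([seq (c *: p.1, p.2) | p <- D x] ++ D y).
Hypothesis Delta_mul : forall x y : M,
  teq (D (x * y)) [seq (p.1 * q.1, p.2 * q.2) | p <- D x, q <- D y].
Hypothesis Delta_coassoc : forall x : M, teq3 (cop2 D x) (cop2' D x).
Hypothesis Delta_cocomm : cocommutative D.

Lemma sum_Delta_linear (V : lmodType CC) (H : M * M -> V) :
  bilin (fun u w => H (u, w)) -> linear (fun x => \sum_(p <- D x) H p).
Proof.
move=> bH c x y.
have pairE z : \sum_(p <- D z) H p = \sum_(p <- D z) H (p.1, p.2).
  by apply: eq_bigr => -[].
rewrite !pairE; have := Delta_linear c x y bH.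
rewrite big_cat big_map /= => ->; rewrite scaler_sumr; congr (_ + _).
by apply: eq_bigr => -[u w] _; exact: (GRing.scalable_linear (bilin_linearl bH w)).
Qed.

Lemma sum_Delta_mul (V : lmodType CC) (G : M -> M -> V) x y : bilin G ->
  \sum_(p <- D (x * y)) G p.1 p.2 =
  \sum_(p <- D x) \sum_(q <- D y) G (p.1 * q.1) (p.2 * q.2).
Proof. by move=> bG; rewrite (Delta_mul x y bG) big_allpairs_dep. Qed.

Lemma sum_Delta_coassoc (V : lmodType CC) (T : M -> M -> M -> V) x : trilin T ->
  \sum_(p <- D x) \sum_(q <- D p.1) T q.1 q.2 p.2 =
  \sum_(p <- D x) \sum_(q <- D p.2) T p.1 q.1 q.2.
Proof.
move=> tT; have := Delta_coassoc x tT; rewrite /cop2 /cop2' !big_flatten /= !big_map.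
by under eq_bigr do rewrite big_map; under [in RHS]eq_bigr do rewrite big_map.
Qed.

Lemma sum_Delta_swap (V : lmodType CC) (G : M -> M -> V) x : bilin G ->
  \sum_(p <- D x) G p.1 p.2 = \sum_(p <- D x) G p.2 p.1.
Proof. by move=> bG; rewrite (Delta_cocomm x bG) big_map. Qed.

Ltac multilinear :=
  intros; cbv beta; cbn [fst snd];
  first
  [ exact: linear_fun_id
  | apply: sum_Delta_linear; multilinear
  | apply: linear_fun_sumr; multilinear
  | apply: bilinP; multilinear
  | apply: trilinP; multilinear
  | apply: linear_bilin_compl; [first [exact: bilin_mul | assumption] | multilinear]
  | apply: linear_bilin_compr; [first [exact: bilin_mul | assumption] | multilinear]
  | match goal with h : _ |- _ => exact: h end ].

Definition multilinear4 (V : lmodType CC) (F : M -> M -> M -> M -> V) :=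
  [/\ forall b c d, linear (fun x => F x b c d), forall a c d, linear (fun x => F a x c d),
      forall a b d, linear (fun x => F a b x d) & forall a b c, linear (F a b c)].

Definition sum_Delta4 (V : lmodType CC) x (F : M -> M -> M -> M -> V) :=
  \sum_(p <- D x) \sum_(q <- D p.1) \sum_(t <- D p.2) F q.1 q.2 t.1 t.2.

Lemma eq_sum_Delta4 (V : lmodType CC) x (F G : M -> M -> M -> M -> V) :
  (forall a b c d, F a b c d = G a b c d) -> sum_Delta4 x F = sum_Delta4 x G.
Proof. by move=> FG; do 3!(apply: eq_bigr => ? _); apply: FG. Qed.

Section SumDelta4.
Variables (V : lmodType CC) (F : M -> M -> M -> M -> V).
Hypothesis F_multilinear : multilinear4 F.
Let linF1 := let: And4 h _ _ _ := F_multilinear in h.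
Let linF2 := let: And4 _ h _ _ := F_multilinear in h.
Let linF3 := let: And4 _ _ h _ := F_multilinear in h.
Let linF4 := let: And4 _ _ _ h := F_multilinear in h.

Lemma sum_Delta4_swap12 x : sum_Delta4 x F = sum_Delta4 x (fun a b c d => F b a c d).
Proof.
apply: eq_bigr => p _.
apply: (sum_Delta_swap (G := fun u w => \sum_(t <- D p.2) F u w t.1 t.2)); multilinear.
Qed.

Lemma sum_Delta4_swap34 x : sum_Delta4 x F = sum_Delta4 x (fun a b c d => F a b d c).
Proof.
apply: eq_bigr => p _; apply: eq_bigr => q _.
apply: (sum_Delta_swap (G := fun u w => F q.1 q.2 u w)); multilinear.
Qed.

Lemma sum_Delta4_swap23 x : sum_Delta4 x F = sum_Delta4 x (fun a b c d => F a c b d).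
Proof.
rewrite /sum_Delta4.
transitivity (\sum_(p <- D x) \sum_(t <- D p.2) \sum_(q <- D p.1) F q.1 q.2 t.1 t.2).
  by apply: eq_bigr => p _; rewrite exchange_big.
rewrite -(sum_Delta_coassoc (T := fun y c d => \sum_(q <- D y) F q.1 q.2 c d));
  last by multilinear.
transitivity (\sum_(p <- D x) \sum_(s <- D p.1) \sum_(q <- D s.1) F q.1 s.2 q.2 p.2).
  apply: eq_bigr => p _ /=.
  rewrite (sum_Delta_coassoc (T := fun a b c => F a b c p.2)); last by multilinear.
  rewrite [RHS](sum_Delta_coassoc (T := fun a c b => F a b c p.2)); last by multilinear.
  apply: eq_bigr => s _ /=.
  apply: (sum_Delta_swap (G := fun u w => F s.1 u w p.2)); multilinear.
rewrite (sum_Delta_coassoc (T := fun y b d => \sum_(q <- D y) F q.1 b q.2 d));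
  last by multilinear.
by apply: eq_bigr => p _; rewrite exchange_big.
Qed.

End SumDelta4.

Lemma sum_Delta4_interleave (V : lmodType CC) x y
    (G : M -> M -> M -> M -> M -> M -> M -> M -> V) :
  \sum_(P <- D x) \sum_(Q <- D y) \sum_(p <- D P.1) \sum_(q <- D Q.1)
    \sum_(u <- D P.2) \sum_(v <- D Q.2) G p.1 p.2 u.1 u.2 q.1 q.2 v.1 v.2 =
  sum_Delta4 x (fun a b c d => sum_Delta4 y (G a b c d)).
Proof.
apply: eq_bigr => P _; rewrite exchange_big; apply: eq_bigr => p _.
by under eq_bigr do rewrite exchange_big; rewrite exchange_big.
Qed.

Lemma sum_Delta_rotate (V : lmodType CC) (T : M -> M -> M -> V) x : trilin T ->
  \sum_(P <- D x) \sum_(p <- D P.2) T P.1 p.1 p.2 =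
  \sum_(p <- D x) \sum_(P <- D p.1) T P.1 p.2 P.2.
Proof.
move=> tT; have [linT1 bilinT23] := tT.
transitivity (\sum_(P <- D x) \sum_(p <- D P.2) T P.1 p.2 p.1).
  by apply: eq_bigr => P _; apply: (sum_Delta_swap (G := T P.1)).
rewrite -(sum_Delta_coassoc (T := fun a b c => T a c b)) //.
apply: trilinP => [b c d u v|a b|a c]; first exact: linT1.
  exact: bilin_linearr.
exact: bilin_linearl.
Qed.

Lemma sum_bullet (A : comAlgType CC) (V : lmodType CC) (t : M -> M -> A) X Y (f : M -> A -> V) :
  \sum_(p <- bullet D t X Y) f p.1 p.2 =
  \sum_(u <- X) \sum_(v <- Y) \sum_(p <- D u.1) \sum_(q <- D v.1)
    f (p.1 * q.1) (u.2 * v.2 * t p.2 q.2).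
Proof.
rewrite big_flatten big_map; apply: eq_bigr => u _.
rewrite big_flatten big_map; apply: eq_bigr => v _.
by rewrite big_allpairs_dep.
Qed.

Section Bicharacter.
Variables (A : comAlgType CC) (r : M -> M -> A).
Hypothesis r_bilin : bilin r.
Hypothesis r_mull : forall x y z, r (x * y) z = \sum_(p <- D z) r x p.1 * r y p.2.
Hypothesis r_mulr : forall x y z, r x (y * z) = \sum_(p <- D x) r p.1 y * r p.2 z.

Lemma bichar_mul_mul x y z w :
  r (x * y) (z * w) = \sum_(p <- D x) \sum_(q <- D y) \sum_(u <- D z) \sum_(v <- D w)
    r p.1 u.1 * r p.2 v.1 * (r q.1 u.2 * r q.2 v.2).
Proof.
rewrite r_mull (sum_Delta_mul (G := fun u v => r x u * r y v)); last by multilinear.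
under eq_bigr => u _ do under eq_bigr => v _ do rewrite !r_mulr big_distrlr.
under eq_bigr => u _ do rewrite exchange_big.
rewrite exchange_big; apply: eq_bigr => p _.
under eq_bigr => u _ do rewrite exchange_big.
by rewrite exchange_big.
Qed.

Definition rDelta x := \sum_(p <- D x) r p.1 p.2.

Lemma rDelta_mul_expand x y : rDelta (x * y) =
  sum_Delta4 x (fun a b c d => sum_Delta4 y (fun e g h k => r a c * r b h * (r e d * r g k))).
Proof.
rewrite /rDelta (sum_Delta_mul _ _ r_bilin).
under eq_bigr do under eq_bigr do rewrite bichar_mul_mul.
exact: (sum_Delta4_interleave _ _ (fun a b c d e g h k => r a c * r b h * (r e d * r g k))).
Qed.

Lemma rDelta_symmetrization_expand x y :
  \sum_(P <- D x) \sum_(Q <- D y) rDelta P.1 * rDelta Q.1 * symmetrization D r P.2 Q.2 =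
  sum_Delta4 x (fun a b c d => sum_Delta4 y (fun e g h k => r a b * r e g * (r c h * r k d))).
Proof.
rewrite -(sum_Delta4_interleave _ _ (fun a b c d e g h k => r a b * r e g * (r c h * r k d))).
apply: eq_bigr => P _; apply: eq_bigr => Q _.
rewrite /rDelta /symmetrization /bconv /btr big_distrlr mulr_suml; apply: eq_bigr => p _.
rewrite mulr_suml; apply: eq_bigr => q _.
rewrite mulr_sumr; apply: eq_bigr => u _.
by rewrite mulr_sumr.
Qed.

Lemma rDelta_mul x y : rDelta (x * y) =
  \sum_(P <- D x) \sum_(Q <- D y) rDelta P.1 * rDelta Q.1 * symmetrization D r P.2 Q.2.
Proof.
rewrite rDelta_mul_expand rDelta_symmetrization_expand.
rewrite sum_Delta4_swap23; last by split; rewrite /sum_Delta4; multilinear.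
apply: eq_sum_Delta4 => a b c d.
pose G e g h k := r a b * r e g * (r c h * r k d).
transitivity (sum_Delta4 y (fun e g h k => G g k h e)).
  by apply: eq_sum_Delta4 => e g h k; rewrite /G; ring.
rewrite sum_Delta4_swap12; last by rewrite /G; split; multilinear.
rewrite sum_Delta4_swap34; last by rewrite /G; split; multilinear.
rewrite sum_Delta4_swap23; last by rewrite /G; split; multilinear.
by rewrite sum_Delta4_swap34; last by rewrite /G; split; multilinear.
Qed.

Lemma sum_EQ (V : lmodType CC) (f : M -> A -> V) m : (forall u, linear (f u)) ->
  \sum_(p <- EQ D r m) f p.1 p.2 = \sum_(p <- D m) f p.2 (rDelta p.1).
Proof.
move=> linf; rewrite /EQ /cop2 big_map big_flatten big_map; apply: eq_bigr => p _.
by rewrite big_map (linear_fun_sum _ _ (linf _)).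
Qed.

Lemma EQ_mul a b :
  teq (EQ D r (a * b)) (bullet D (symmetrization D r) (EQ D r a) (EQ D r b)).
Proof.
move=> V f bf; have linf := bilin_linearr bf.
have lin_rDelta : linear rDelta by rewrite /rDelta; multilinear.
set s := symmetrization D r.
have bs : bilin s by rewrite /s /symmetrization /bconv /btr; multilinear.
transitivity (\sum_(p <- D a) \sum_(P <- D p.1) \sum_(q <- D b) \sum_(Q <- D q.1)
    f (p.2 * q.2) (rDelta P.1 * rDelta Q.1 * s P.2 Q.2)).
  rewrite sum_EQ // (sum_Delta_mul (G := fun u w => f w (rDelta u))); last by multilinear.
  apply: eq_bigr => p _.
  under eq_bigr => q _ do rewrite rDelta_mul (linear_fun_sum _ _ (linf _)).
  under eq_bigr => q _ do under eq_bigr => P _ do rewrite (linear_fun_sum _ _ (linf _)).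
  by rewrite exchange_big.
(* Coassociativity and cocommutativity bring the factor living in M to the outer level. *)
symmetry; rewrite sum_bullet (sum_EQ (f := fun m x => \sum_(v <- EQ D r b)
  \sum_(p <- D m) \sum_(q <- D v.1) f (p.1 * q.1) (x * v.2 * s p.2 q.2))); last by multilinear.
transitivity (\sum_(P <- D a) \sum_(p <- D P.2) \sum_(Q <- D b) \sum_(q <- D Q.2)
    f (p.1 * q.1) (rDelta P.1 * rDelta Q.1 * s p.2 q.2)).
  apply: eq_bigr => P _; rewrite exchange_big; apply: eq_bigr => p _.
  rewrite (sum_EQ (f := fun m y => \sum_(q <- D m) f (p.1 * q.1) (rDelta P.1 * y * s p.2 q.2))) //.
  by multilinear.
rewrite (sum_Delta_rotate (T := fun x y z => \sum_(Q <- D b) \sum_(q <- D Q.2)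
  f (y * q.1) (rDelta x * rDelta Q.1 * s z q.2))); last by multilinear.
apply: eq_bigr => p _; apply: eq_bigr => P _.
apply: (sum_Delta_rotate (T := fun x y z => f (p.2 * y) (rDelta P.1 * rDelta x * s P.2 z))).
multilinear.
Qed.

End Bicharacter.

End Sweedler.

Theorem lemma2p6 (M : comAlgType CC) (D : M -> seq (M * M)) (eps : M -> CC)
    (S : M -> M) (A : comAlgType CC) (r : M -> M -> A) :
  is_hopf D eps S -> cocommutative D -> is_bicharacter D eps r ->
  forall a b : M,
    teqMA (EQ D r (a * b))
          (bullet D (symmetrization D r) (EQ D r a) (EQ D r b)).
Proof.
move=> [Dlin [Dmul [_ [Dcoassoc _]]]] Dcocomm [r_bilin _ r_mull r_mulr].
exact: EQ_mul.
Qed.
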